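(* Let $\mathcal P$ be finite, $\sigma$ a switching signal, and $a_p^i:\mathbb R_{\ge0}\to\mathbb R$ ($i\in\{1,\dots,m\}$, $p\in\mathcal P$) locally Lebesgue integrable functions. (1) Let $\hat a_p^i:=\limsup_{t\to\infty:\,\sigma(t)=p}a_p^i(t)$. If $\hat a_p^i$ is finite for all $i$ and all $p\in\mathcal P_\infty$, then $$\limsup_{T\to\infty}\sum_{i=1}^m\frac1T\max_{t\in[0,T]}\sum_{p\in\mathcal P}\int_0^ta_p^i(s)\mathbf 1[\sigma(s)=p]\,ds\le\limsup_{T\to\infty}\sum_{i=1}^m\frac1T\max_{t\in[0,T]}\sum_{p\in\mathcal P_+}\hat a_p^i\tau_p(t).$$ (2) Let $\check a_p^i:=\liminf_{t\to\infty:\,\sigma(t)=p}a_p^i(t)$. If $\check a_p^i$ is finite for all $i$ and all $p\in\mathcal P_\infty$, then $$\limsup_{T\to\infty}\sum_{i=1}^m\frac1T\max_{t\in[0,T]}\sum_{p\in\mathcal P}\int_0^ta_p^i(s)\mathbf 1[\sigma(s)=p]\,ds\ge\limsup_{T\to\infty}\sum_{i=1}^m\frac1T\max_{t\in[0,T]}\sum_{p\in\mathcal P_+}\check a_p^i\tau_p(t)$$ and $$\limsup_{t\to\infty}\sum_{i=1}^m\max\Big\{\frac1t\sum_{p\in\mathcal P}\int_0^ta_p^i(s)\mathbf 1[\sigma(s)=p]\,ds,\,0\Big\}\ge\limsup_{t\to\infty}\sum_{i=1}^m\max\Big\{\sum_{p\in\mathcal P_+}\check a_p^i\rho_p(t)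,\,0\Big\}.$$
   Context: A switching signal is a right-continuous piecewise-constant $\sigma:\mathbb R_{\ge0}\to\mathcal P$ with finitely many switches in every bounded interval. $\tau_p(t):=\int_0^t\mathbf 1[\sigma(s)=p]ds$, $\rho_p(t):=\tau_p(t)/t$ for $t>0$ ($\rho_p(0):=\mathbf 1[\sigma(0)=p]$), $\hat\rho_p:=\limsup_{t\to\infty}\rho_p(t)$, $\mathcal P_\infty:=\{p:\sup\{t\ge0:\sigma(t)=p\}=\infty\}$, $\mathcal P_+:=\{p:\hat\rho_p>0\}$. $\limsup_{t\to\infty:\sigma(t)=p}g(t):=\lim_{s\to\infty}\sup\{g(t):t\ge s,\sigma(t)=p\}$, and analogously for $\liminf$. *)

From HB Require Import structures.
From mathcomp Require Import all_boot all_order all_algebra.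
From mathcomp Require Import all_classical all_reals all_analysis.
Set Implicit Arguments. Unset Strict Implicit. Unset Printing Implicit Defensive.
Import Order.TTheory GRing.Theory Num.Theory.
Import numFieldNormedType.Exports.
Local Open Scope classical_set_scope.
Local Open Scope ring_scope.

Section Defs.
Context {R : realType} {P : finType}.

(* sigma is right-continuous piecewise constant with finitely many switches
   in every bounded interval: for every T > 0 there is a finite partition
   0 = t_0 < t_1 < ... < t_n = T of [0,T] such that sigma is constant on each
   [t_k, t_{k+1}). *)
Definition switching_signal (sigma : R -> P) : Prop :=
  forall T : R, 0 < T -> exists ts : seq R,
    [/\ sorted <%R ts, head 0 ts = 0, last 0 ts = T, (1 < size ts)%N &
        forall k : nat, (k.+1 < size ts)%N -> forall t : R,
          nth 0 ts k <= t < nth 0 ts k.+1 -> sigma t = sigma (nth 0 ts k)].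

Definition loc_integrable (f : R -> R) : Prop :=
  forall T : R, 0 <= T -> (lebesgue_measure : measure _ R).-integrable `[0, T] (EFin \o f).

Definition integ0 (f : R -> R) (t : R) : R :=
  Rintegral (lebesgue_measure : measure _ R) `[0, t] f.

Definition ind (sigma : R -> P) (p : P) (s : R) : R := (sigma s == p)%:R.

Definition tau (sigma : R -> P) (p : P) (t : R) : R := integ0 (ind sigma p) t.

Definition rho (sigma : R -> P) (p : P) (t : R) : R :=
  if 0 < t then tau sigma p t / t else ind sigma p 0.

Definition limsup_on (A : set R) (g : R -> \bar R) : \bar R :=
  lim ((fun s : R => ereal_sup (g @` [set t | s <= t /\ A t])) x @[x --> +oo]).
Definition liminf_on (A : set R) (g : R -> \bar R) : \bar R :=
  lim ((fun s : R => ereal_inf (g @` [set t | s <= t /\ A t])) x @[x --> +oo]).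

Definition limsup_inf (g : R -> \bar R) : \bar R := limsup_on setT g.

Definition rho_hat (sigma : R -> P) (p : P) : \bar R :=
  limsup_inf (fun t => (rho sigma p t)%:E).

Definition P_inf (sigma : R -> P) (p : P) : Prop :=
  ereal_sup (EFin @` [set t | 0 <= t /\ sigma t = p]) = +oo%E.

Definition P_plus (sigma : R -> P) (p : P) : Prop := (0 < rho_hat sigma p)%E.

(* max_{t in [0,T]} g t  (written as a supremum; the functions to which it
   is applied are continuous, so the supremum is attained) *)
Definition max0 (g : R -> R) (T : R) : \bar R := ereal_sup (EFin @` (g @` `[0, T])).

End Defs.

From HB Require Import structures.
From mathcomp Require Import all_boot all_order all_algebra.
From mathcomp Require Import all_classical all_reals all_analysis.
From mathcomp Require Import ring lra.
Set Implicit Arguments. Unset Strict Implicit. Unset Printing Implicit Defensive.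
Import Order.TTheory GRing.Theory Num.Theory.
Import numFieldNormedType.Exports.
Local Open Scope classical_set_scope.
Local Open Scope ring_scope.

(* On the level set {sigma = p} the function a_p^i is eventually below
   ahat_p^i + e, so int_0^t a_p^i 1[sigma = p] <= C + (ahat_p^i + e) tau_p(t)
   for all t >= 0.  For p outside P_+ the occupation time tau_p(t) is o(t),
   so the whole term is o(t).  Summing over p gives
   A^i(t) <= sum_(p in P_+) ahat_p^i tau_p(t) + O(1) + o(t) uniformly in t,
   and an error of this size disappears once we take the max over [0, T],
   divide by T and pass to the limsup.  The lower bounds are the same argument
   applied to -a. *)

Section LimsupOn.
Context {R : realType}.
Local Open Scope ereal_scope.
Implicit Types (A : set R) (g : R -> \bar R).

Definition sup_tail A g (s : R) := ereal_sup (g @` [set t | (s <= t)%R /\ A t]).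
Definition inf_tail A g (s : R) := ereal_inf (g @` [set t | (s <= t)%R /\ A t]).

Lemma limsup_onE A g : limsup_on A g = ereal_inf (range (sup_tail A g)).
Proof.
apply: cvg_lim; first exact: ereal_hausdorff.
apply: nonincreasing_cvge => x y xy; apply: ereal_sup_le.
by move=> _ [t [yt At] <-]; exists t => //; split => //; apply: le_trans yt.
Qed.

Lemma liminf_onE A g : liminf_on A g = ereal_sup (range (inf_tail A g)).
Proof.
apply: cvg_lim; first exact: ereal_hausdorff.
apply: nondecreasing_cvge => x y xy; apply: ereal_inf_le_tmp.
by move=> _ [t [yt At] <-]; exists t => //; split => //; apply: le_trans yt.
Qed.

Lemma limsup_on_lt A g (c : R) : limsup_on A g < c%:E ->
  exists s, forall t, (s <= t)%R -> A t -> g t < c%:E.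
Proof.
rewrite limsup_onE => /ereal_inf_lt [_ [s _ <-]] hs; exists s => t st At.
by apply: le_lt_trans hs; apply: ereal_sup_ubound; exists t.
Qed.

Lemma liminf_on_gt A g (c : R) : c%:E < liminf_on A g ->
  exists s, forall t, (s <= t)%R -> A t -> c%:E < g t.
Proof.
rewrite liminf_onE => /ereal_sup_gt [_ [s _ <-]] hs; exists s => t st At.
by apply: lt_le_trans hs _; apply: ereal_inf_lbound; exists t.
Qed.

End LimsupOn.

Section VanishingError.
Context {R : realType}.
Local Open Scope ereal_scope.
Implicit Types f g : R -> \bar R.

Definition le_upto_vanishing f g := forall e : R, (0 < e)%R ->
  exists T0, forall T, (T0 <= T)%R -> f T <= g T + e%:E.

Lemma limsup_inf_le_upto_vanishing f g :
  le_upto_vanishing f g -> limsup_inf f <= limsup_inf g.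
Proof.
move=> fg; rewrite /limsup_inf !limsup_onE.
apply/lee_subgt0Pr => e e0; have [T0 HT0] := fg e e0.
apply: le_ereal_inf_tmp => _ [s _ <-]; rewrite leeBlDr //.
set s' := Num.max s T0.
apply: (@le_trans _ _ (sup_tail setT f s')).
  by apply: ereal_inf_lbound; exists s'.
apply: ge_ereal_sup => _ [t [s't _] <-].
have [st T0t] : (s <= t)%R /\ (T0 <= t)%R by move: s't; rewrite ge_max => /andP.
apply: (le_trans (HT0 t T0t)); apply: leeD2r.
by apply: ereal_sup_ubound; exists t.
Qed.

Lemma le_upto_vanishingD f1 f2 g1 g2 :
  le_upto_vanishing f1 g1 -> le_upto_vanishing f2 g2 ->
  le_upto_vanishing (fun t => f1 t + f2 t) (fun t => g1 t + g2 t).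
Proof.
move=> fg1 fg2 e e0; have e20 : (0 < e / 2)%R by rewrite divr_gt0.
have [T1 H1] := fg1 _ e20; have [T2 H2] := fg2 _ e20.
exists (Num.max T1 T2) => T; rewrite ge_max => /andP[T1T T2T].
apply: le_trans (leeD (H1 T T1T) (H2 T T2T)) _.
by rewrite addeACA -EFinD -splitr.
Qed.

Lemma le_upto_vanishing_sum (I : Type) (r : seq I) (f g : I -> R -> \bar R) :
  (forall i, le_upto_vanishing (f i) (g i)) ->
  le_upto_vanishing (fun t => \sum_(i <- r) f i t) (fun t => \sum_(i <- r) g i t).
Proof.
move=> fg; elim: r => [|i r IH] e e0.
  by exists 0%R => T _; rewrite !big_nil add0e lee_fin ltW.
have [T0 HT0] := le_upto_vanishingD (fg i) IH e0.
by exists T0 => T /HT0; rewrite !big_cons.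
Qed.

End VanishingError.

Section SublinearError.
Context {R : realType}.
Implicit Types X Y : R -> R.

Definition le_upto_sublinear X Y := forall e : R, 0 < e ->
  exists K, forall t, 0 <= t -> X t <= Y t + K + e * t.

Lemma le_upto_sublinearD X1 X2 Y1 Y2 :
  le_upto_sublinear X1 Y1 -> le_upto_sublinear X2 Y2 ->
  le_upto_sublinear (fun t => X1 t + X2 t) (fun t => Y1 t + Y2 t).
Proof.
move=> XY1 XY2 e e0; have e20 : 0 < e / 2 by rewrite divr_gt0.
have [K1 H1] := XY1 _ e20; have [K2 H2] := XY2 _ e20.
exists (K1 + K2) => t t0; have := H1 t t0; have := H2 t t0.
have -> : e * t = e / 2 * t + e / 2 * t by rewrite -mulrDl -splitr.
lra.
Qed.

Lemma le_upto_sublinear_sum (I : Type) (r : seq I) (X Y : I -> R -> R) :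
  (forall i, le_upto_sublinear (X i) (Y i)) ->
  le_upto_sublinear (fun t => \sum_(i <- r) X i t) (fun t => \sum_(i <- r) Y i t).
Proof.
move=> XY; elim: r => [|i r IH] e e0.
  by exists 0 => t t0; rewrite !big_nil !add0r mulr_ge0 // ltW.
have [K HK] := le_upto_sublinearD (XY i) IH e0.
by exists K => t /HK; rewrite !big_cons.
Qed.

Lemma le_upto_sublinearZ (k : R) X Y : 0 <= k -> le_upto_sublinear X Y ->
  le_upto_sublinear (fun t => k * X t) (fun t => k * Y t).
Proof.
move=> k0 XY e e0; have k1 : 0 < k + 1 by rewrite ltr_wpDl.
have [K HK] := XY _ (divr_gt0 e0 k1).
exists (k * K) => t t0; have := ler_wpM2l k0 (HK t t0).
have : k * (e / (k + 1) * t) <= e * t.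
  rewrite mulrA ler_wpM2r // mulrCA ger_pMr // ler_pdivrMr // mul1r.
  by rewrite lerDl.
rewrite !mulrDr; lra.
Qed.

Lemma le_upto_sublinear_uniform X Y : le_upto_sublinear X Y ->
  forall e, 0 < e -> exists2 T0, 0 < T0 &
    forall T t, T0 <= T -> 0 <= t <= T -> X t <= Y t + e * T.
Proof.
move=> XY e e0; have e20 : 0 < e / 2 by rewrite divr_gt0.
have [K HK] := XY _ e20.
exists (Num.max 1 (2 * `|K| / e)); first by rewrite lt_max ltr01.
move=> T t; rewrite ge_max => /andP[_ KT] /andP[t0 tT].
have : `|K| <= e / 2 * T.
  have KeT : 2 * `|K| <= T * e by move: KT; rewrite ler_pdivrMr.
  have -> : e / 2 * T = (T * e) / 2 by rewrite mulrC mulrA.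
  lra.
have : e / 2 * t <= e / 2 * T by rewrite ler_wpM2l // ltW.
have := HK t t0; have := ler_norm K.
have -> : e * T = e / 2 * T + e / 2 * T by rewrite -mulrDl -splitr.
lra.
Qed.

Lemma max0_leD X Y (c T : R) :
  (forall t, 0 <= t <= T -> X t <= Y t + c) ->
  (max0 X T <= max0 Y T + c%:E)%E.
Proof.
move=> XY; apply: ge_ereal_sup => _ [_ [t /= tT <-] <-].
have t0T : 0 <= t <= T by move: tT; rewrite in_itv.
apply: (@le_trans _ _ ((Y t)%:E + c%:E)%E); first by rewrite -EFinD lee_fin XY.
by rewrite leeD2r //; apply: ereal_sup_ubound; exists (Y t) => //; exists t.
Qed.

Lemma le_upto_vanishing_max0 X Y : le_upto_sublinear X Y ->
  le_upto_vanishing (fun T => ((T^-1)%:E * max0 X T)%E)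
                    (fun T => ((T^-1)%:E * max0 Y T)%E).
Proof.
move=> /le_upto_sublinear_uniform XY e /XY[T0 T00 HT0].
exists T0 => T T0T; have Tpos : 0 < T := lt_le_trans T00 T0T.
have iT : (0 <= (T^-1)%:E)%E by rewrite lee_fin invr_ge0 ltW.
apply: le_trans (lee_wpmul2l iT (max0_leD (fun t => HT0 T t T0T))) _.
by rewrite muleDr ?fin_num_adde_defl // -EFinM mulrCA mulVf ?gt_eqF ?mulr1.
Qed.

Lemma le_upto_vanishing_pos_part_div X Y Z : le_upto_sublinear X Y ->
  (forall t, 0 < t -> Z t = t^-1 * X t) ->
  le_upto_vanishing (fun t => (Num.max (Z t) 0)%:E)
                    (fun t => (Num.max (t^-1 * Y t) 0)%:E).
Proof.
move=> /le_upto_sublinear_uniform XY ZX e /[dup] e0 /XY[T0 T00 HT0].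
exists T0 => T T0T; have Tpos : 0 < T := lt_le_trans T00 T0T.
have : T^-1 * X T <= T^-1 * Y T + e.
  have iT : 0 <= T^-1 by rewrite invr_ge0 ltW.
  have := ler_wpM2l iT (HT0 T T T0T _).
  rewrite mulrDr mulrCA mulVf ?gt_eqF // mulr1; apply.
  by rewrite lexx ltW.
rewrite -EFinD lee_fin ZX // => XYT.
rewrite ge_max; apply/andP; split.
  by apply: (le_trans XYT); rewrite lerD2r le_max lexx.
by rewrite addr_ge0 // ?le_max ?lexx ?orbT // ltW.
Qed.

End SublinearError.

Lemma nth_itv_cover {R : realType} (d x t : R) (s : seq R) :
  x <= t < last x s ->
  exists2 k, (k < size s)%N & nth d (x :: s) k <= t < nth d (x :: s) k.+1.
Proof.
elim: s x => [|y s IH] x /= xtl.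
  by move: xtl => /andP[/le_lt_trans/[apply]]; rewrite ltxx.
have [ty|yt] := ltP t y; first by exists 0%N => //=; case/andP: xtl => -> _.
have [|k ks hk] := IH y; first by rewrite yt; case/andP: xtl.
by exists k.+1.
Qed.

Lemma integ0_bounded_above {R : realType} (h : R -> R) (s0 : R) :
  loc_integrable h -> 0 <= s0 -> (forall s, s0 <= s -> h s <= 0) ->
  exists C, forall t, 0 <= t -> integ0 h t <= C.
Proof.
(* Past s0 the integral can only decrease, so int_0^s0 |h| bounds it. *)
move=> hi s00 hs; pose C := integ0 (fun x => `|h x|) s0; exists C.
have small t : 0 <= t <= s0 -> integ0 h t <= C.
  case/andP=> t0 ts; apply: (le_trans (ler_norm _)).
  apply: (le_trans (le_normr_Rintegral _ (hi t t0))) => //.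
  rewrite -subr_ge0 /C /integ0.
  rewrite (@Rintegral_itvB _ (fun x => `|h x|) (BLeft 0) (BRight s0) t) //.
    by apply: Rintegral_ge0 => x _.
  exact/integrable_norm/hi.
move=> t t0; have [ts|st] := leP t s0; first by apply: small; rewrite t0 ts.
apply: le_trans (small s0 _); last by rewrite s00 lexx.
rewrite -subr_le0 /integ0 (@Rintegral_itvB _ h (BLeft 0) (BRight t) s0) //.
- apply: (@le_trans _ _ (\int[lebesgue_measure]_(x in `]s0, t]) 0)).
    apply: le_Rintegral => //.
    + apply: integrableS (hi t t0) => //.
      by move=> x /=; rewrite !in_itv /= => /andP[/ltW/(le_trans s00) -> ->].
    + by apply: eq_integrable (integrable0 _ _).
    + by move=> x /=; rewrite in_itv /= => /andP[/ltW/hs ? _].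
  by rewrite Rintegral_cst ?mul0r.
- exact: hi.
- by rewrite bnd_simp ltW.
Qed.

Section SwitchingSignal.
Context {R : realType} {P : finType} (sigma : R -> P).
Hypothesis sw : switching_signal sigma.
Local Notation mu := (@lebesgue_measure R).
Local Notation limsup_at p a :=
  (limsup_on [set t | sigma t = p] (fun t => (a t)%:E)).
Local Notation liminf_at p a :=
  (liminf_on [set t | sigma t = p] (fun t => (a t)%:E)).

Lemma measurable_sigma_eq (p : P) (T : R) : 0 < T ->
  measurable (`[0, T[ `&` [set s | sigma s = p]).
Proof.
move=> T0; have [ts [_ h0 hT hsz hc]] := sw T0.
pose F k := if (k.+1 < size ts)%N && (sigma (nth 0 ts k) == p) then
   `[nth 0 ts k, nth 0 ts k.+1[ `&` `[0, T[ else set0.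
have ets : ts = 0 :: behead ts by clear -h0 hsz; case: ts h0 hsz => //= x s' ->.
suff -> : `[0, T[ `&` [set s | sigma s = p] = \bigcup_k F k.
  apply: bigcupT_measurable => k; rewrite /F; case: ifP => _ //.
  exact: measurableI.
apply/seteqP; split.
- move=> s [] /= /[!in_itv] /= /andP[s0 sT] sp.
  have [|k ks hk] := @nth_itv_cover _ 0 0 s (behead ts).
    by move: hT; rewrite {1}ets /= => ->; rewrite s0.
  rewrite -ets in hk; have {}ks : (k.+1 < size ts)%N by rewrite ets.
  exists k => //; rewrite /F ks -(hc k ks s hk) sp eqxx; split => //=.
  by rewrite in_itv /= s0.
- move=> s [k _]; rewrite /F; case: ifP => // /andP[ks /eqP sp] [hk hs].
  by split => //=; rewrite -sp; apply: hc; move: hk; rewrite /= in_itv.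
Qed.

Lemma measurable_fun_ind (p : P) (T : R) : 0 <= T ->
  measurable_fun (`[0, T] : set R) (ind sigma p).
Proof.
move=> T0; have T1 : 0 < T + 1 by rewrite ltr_wpDl.
apply: (eq_measurable_fun (\1_(`[0, T + 1[ `&` [set s | sigma s = p]) : R -> R)).
  move=> x /[!inE] /=; rewrite in_itv /= => /andP[x0 xT].
  rewrite indicE /ind; have [xp|xp] := eqVneq (sigma x) p.
    rewrite mem_set //; split => //=.
    by rewrite in_itv /= x0 (le_lt_trans xT) ?ltrDl.
  by rewrite memNset // => -[_ /eqP]; rewrite (negbTE xp).
apply: measurable_realfun.measurable_indic; exact: measurable_sigma_eq.
Qed.

Lemma bounded_ind (p : P) (D : set R) : [bounded ind sigma p x | x in D].
Proof.
rewrite /bounded_near; near=> M => x _ /=; rewrite /ind.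
have M1 : 1 <= M by near: M; apply: nbhs_pinfty_ge; rewrite num_real.
by case: eqP => _; rewrite ?normr0 ?normr1 // (le_trans ler01 M1).
Unshelve. all: by end_near.
Qed.

Lemma integrable_ind (p : P) (T : R) : 0 <= T ->
  mu.-integrable `[0, T] (EFin \o ind sigma p).
Proof.
move=> T0; apply: measurable_bounded_integrable => //.
- exact/compact_finite_measure/segment_compact.
- exact: measurable_fun_ind.
- exact: bounded_ind.
Qed.

Lemma integrable_mul_ind (p : P) (a : R -> R) (T : R) : loc_integrable a ->
  0 <= T -> mu.-integrable `[0, T] (EFin \o (fun s => a s * ind sigma p s)).
Proof.
move=> ai T0.
exact: integrableMl (ai T T0) (measurable_fun_ind p T0) (bounded_ind p _).
Qed.

Lemma tau_ge0 (p : P) (t : R) : 0 <= tau sigma p t.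
Proof. by apply: Rintegral_ge0 => x _; rewrite /ind ler0n. Qed.

Lemma tau_le (p : P) (t : R) : 0 <= t -> tau sigma p t <= t.
Proof.
move=> t0; apply: (@le_trans _ _ (\int[mu]_(x in `[0, t]) (fun _ => 1 : R) x)).
  apply: le_Rintegral => //.
  - exact: integrable_ind.
  - apply: continuous_compact_integrable; first exact: segment_compact.
    by apply: continuous_subspaceT => x; apply: cst_continuous.
  - by move=> x _; rewrite /ind; case: eqP.
rewrite Rintegral_cst // mul1r.
suff : fine (mu `[0, t]) <= t by [].
rewrite lebesgue_measure_itv /= lte_fin.
by case: ltP => [_|]; rewrite /= ?subr0 // => /(le_trans t0) ->.
Qed.

Lemma integ0_mul_ind_subr (p : P) (a : R -> R) (c t : R) :
  loc_integrable a -> 0 <= t ->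
  integ0 (fun s => (a s - c) * ind sigma p s) t =
  integ0 (fun s => a s * ind sigma p s) t - c * tau sigma p t.
Proof.
move=> ai t0; have iI := integrable_ind p t0.
have iaI := integrable_mul_ind p ai t0.
rewrite /tau /integ0 -RintegralZl // -RintegralB //.
  by apply: eq_Rintegral => x _; rewrite mulrBl.
exact: eq_integrable (integrableZl _ c iI).
Qed.

Lemma integ0_mul_indN (p : P) (a : R -> R) (t : R) :
  loc_integrable a -> 0 <= t ->
  integ0 (fun s => - a s * ind sigma p s) t =
  - integ0 (fun s => a s * ind sigma p s) t.
Proof.
move=> ai t0; have iaI := integrable_mul_ind p ai t0.
rewrite /integ0 -mulN1r -RintegralZl //.
by apply: eq_Rintegral => x _; rewrite mulN1r mulNr.
Qed.

Lemma integ0_mul_ind_le (p : P) (a : R -> R) (c : R) : loc_integrable a ->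
  (exists s, forall t, s <= t -> sigma t = p -> a t <= c) ->
  exists C, forall t, 0 <= t ->
    integ0 (fun s => a s * ind sigma p s) t <= C + c * tau sigma p t.
Proof.
move=> ai [s hs].
have hi : loc_integrable (fun x => (a x - c) * ind sigma p x).
  move=> T T0; apply: eq_integrable (integrableB _ (integrable_mul_ind p ai T0)
    (integrableZl _ c (integrable_ind p T0))) => // x _ /=.
  by rewrite mulrBl.
have [||C HC] := integ0_bounded_above hi (_ : 0 <= Num.max s 0).
- by rewrite le_max lexx orbT.
- move=> x; rewrite ge_max => /andP[sx _]; rewrite /ind.
  by case: eqP => [xp|_]; rewrite ?mulr0 // mulr1 subr_le0 hs.
by exists C => t t0; rewrite -lerBlDr -integ0_mul_ind_subr // HC.
Qed.

Lemma sigma_eventually_neq (p : P) : ~ P_inf sigma p ->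
  exists s, forall t, s <= t -> sigma t <> p.
Proof.
rewrite /P_inf => nP.
have ub (t : R) : 0 <= t -> sigma t = p ->
    (t%:E <= ereal_sup (EFin @` [set t | (0 <= t)%R /\ sigma t = p]))%E.
  by move=> t0 tp; apply: ereal_sup_ubound; exists t.
move: (ereal_sup _) nP ub => [M _ ub| //|_ ub].
  exists (Num.max M 0 + 1) => t st tp.
  have /ub/(_ tp) : 0 <= t.
    by apply: le_trans st; rewrite addr_ge0 // le_max lexx orbT.
  rewrite lee_fin; apply/negP; rewrite -ltNge; apply: lt_le_trans st.
  by rewrite ltr_pwDr // le_max lexx.
by exists 0 => t t0 /(ub t t0); rewrite leeNy_eq.
Qed.

(* Outside P_oo the limsup is -oo and [fine] turns it into 0, but then
   sigma t <> p eventually and the bound holds vacuously. *)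
Lemma eventually_le_limsup_at (p : P) (a : R -> R) (e : R) :
  (P_inf sigma p -> limsup_at p a \is a fin_num) -> 0 < e ->
  exists s, forall t, s <= t -> sigma t = p -> a t <= fine (limsup_at p a) + e.
Proof.
move=> afin e0.
have [/afin fin|/sigma_eventually_neq[s hs]] := pselect (P_inf sigma p).
  have /limsup_on_lt[s hs] : (limsup_at p a < (fine (limsup_at p a) + e)%:E)%E.
    by rewrite -[X in (X < _)%E](fineK fin) lte_fin ltrDl.
  by exists s => t st tp; rewrite ltW // -lte_fin hs.
by exists s => t /hs.
Qed.

Lemma eventually_liminf_at_le (p : P) (a : R -> R) (e : R) :
  (P_inf sigma p -> liminf_at p a \is a fin_num) -> 0 < e ->
  exists s, forall t, s <= t -> sigma t = p -> fine (liminf_at p a) - e <= a t.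
Proof.
move=> afin e0.
have [/afin fin|/sigma_eventually_neq[s hs]] := pselect (P_inf sigma p).
  have /liminf_on_gt[s hs] : ((fine (liminf_at p a) - e)%:E < liminf_at p a)%E.
    by rewrite -[X in (_ < X)%E](fineK fin) lte_fin gtrBl.
  by exists s => t st tp; rewrite ltW // -lte_fin hs.
by exists s => t /hs.
Qed.

Lemma tau_sublinear (p : P) :
  ~ P_plus sigma p -> le_upto_sublinear (tau sigma p) (fun=> 0).
Proof.
rewrite /P_plus => nP d d0.
have /limsup_on_lt[s hs] : (rho_hat sigma p < d%:E)%E.
  apply: le_lt_trans (_ : 0%:E < d%:E)%E; last by rewrite lte_fin.
  by rewrite leNgt; apply/negP.
have K0 : 0 <= Num.max s 1 by rewrite le_max ler01 orbT.
exists (Num.max s 1) => t t0; rewrite add0r.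
have [tK|Kt] := leP t (Num.max s 1).
  by have := tau_le p t0; have := mulr_ge0 (ltW d0) t0; lra.
have tpos : 0 < t by apply: lt_trans Kt; rewrite lt_max ltr01 orbT.
have st : s <= t by apply: le_trans (ltW Kt); rewrite le_max lexx.
have := hs t st I; rewrite /rho tpos lte_fin ltr_pdivrMr // => h; lra.
Qed.

Lemma le_upto_sublinear_integ0_mul_ind (p : P) (a : R -> R) (c : R) :
  loc_integrable a ->
  (forall e, 0 < e -> exists s, forall t, s <= t -> sigma t = p -> a t <= c + e) ->
  le_upto_sublinear (integ0 (fun s => a s * ind sigma p s))
    (fun t => if `[< P_plus sigma p >] then c * tau sigma p t else 0).
Proof.
move=> ai ev e e0; case: asboolP => [_|npplus].
  have [C HC] := integ0_mul_ind_le ai (ev e e0).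
  exists C => t t0; have := HC t t0; have := ler_wpM2l (ltW e0) (tau_le p t0).
  rewrite mulrDl; lra.
have [C HC] := integ0_mul_ind_le ai (ev 1 ltr01).
have k0 : 0 <= Num.max (c + 1) 0 by rewrite le_max lexx orbT.
have [K HK] := le_upto_sublinearZ k0 (tau_sublinear npplus) e0.
exists (C + K) => t t0; have := HC t t0; have := HK t t0.
have : (c + 1) * tau sigma p t <= Num.max (c + 1) 0 * tau sigma p t.
  by rewrite ler_wpM2r ?tau_ge0 // le_max lexx.
rewrite mulr0; lra.
Qed.

Lemma le_upto_sublinear_mul_ind_integ0 (p : P) (a : R -> R) (c : R) :
  loc_integrable a ->
  (forall e, 0 < e -> exists s, forall t, s <= t -> sigma t = p -> c - e <= a t) ->
  le_upto_sublinear
    (fun t => if `[< P_plus sigma p >] then c * tau sigma p t else 0)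
    (integ0 (fun s => a s * ind sigma p s)).
Proof.
move=> ai ev; have aNi : loc_integrable (fun s => - a s).
  by move=> T T0; apply: eq_integrable (integrableN (ai T T0)).
have evN e : 0 < e ->
    exists s, forall t, s <= t -> sigma t = p -> - a t <= - c + e.
  by move=> /ev[s hs]; exists s => t st tp; have := hs t st tp; lra.
move=> e /(le_upto_sublinear_integ0_mul_ind aNi evN)[K HK].
exists K => t t0; have := HK t t0; rewrite integ0_mul_indN //.
by case: asboolP => _; rewrite ?mulNr; lra.
Qed.

Lemma le_upto_sublinear_sum_limsup_at (a : P -> R -> R) :
  (forall p, loc_integrable (a p)) ->
  (forall p, P_inf sigma p -> limsup_at p (a p) \is a fin_num) ->
  le_upto_sublinear (fun t => \sum_p integ0 (fun s => a p s * ind sigma p s) t)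
    (fun t => \sum_(p | `[< P_plus sigma p >])
                fine (limsup_at p (a p)) * tau sigma p t).
Proof.
move=> ai afin e e0; have [K HK] := le_upto_sublinear_sum (index_enum P)
  (fun p => le_upto_sublinear_integ0_mul_ind (ai p)
              (fun e => eventually_le_limsup_at (afin p))) e0.
by exists K => t /HK /=; rewrite -big_mkcond.
Qed.

Lemma le_upto_sublinear_sum_liminf_at (a : P -> R -> R) :
  (forall p, loc_integrable (a p)) ->
  (forall p, P_inf sigma p -> liminf_at p (a p) \is a fin_num) ->
  le_upto_sublinear
    (fun t => \sum_(p | `[< P_plus sigma p >])
                fine (liminf_at p (a p)) * tau sigma p t)
    (fun t => \sum_p integ0 (fun s => a p s * ind sigma p s) t).
Proof.
move=> ai afin e e0; have [K HK] := le_upto_sublinear_sum (index_enum P)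
  (fun p => le_upto_sublinear_mul_ind_integ0 (ai p)
              (fun e => eventually_liminf_at_le (afin p))) e0.
by exists K => t /HK /=; rewrite -big_mkcond.
Qed.

End SwitchingSignal.

Theorem lemma7 (R : realType) (P : finType) (m : nat)
    (sigma : R -> P) (a : 'I_m -> P -> R -> R) :
  switching_signal sigma ->
  (forall i p, loc_integrable (a i p)) ->
  let A i t := \sum_(p : P) integ0 (fun s => a i p s * ind sigma p s) t in
  let ahat i p := limsup_on [set t | sigma t = p] (fun t => (a i p t)%:E) in
  let acheck i p := liminf_on [set t | sigma t = p] (fun t => (a i p t)%:E) in
  ((forall i p, P_inf sigma p -> ahat i p \is a fin_num) ->
    (limsup_inf (fun T => \sum_(i < m) ((T^-1)%R%:E * max0 (A i) T))
     <= limsup_inf (fun T => \sum_(i < m) ((T^-1)%R%:E *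
          max0 (fun t => (\sum_(p : P | `[< P_plus sigma p >])
                           fine (ahat i p) * tau sigma p t)%R) T)))%E)
  /\
  ((forall i p, P_inf sigma p -> acheck i p \is a fin_num) ->
    (limsup_inf (fun T => \sum_(i < m) ((T^-1)%R%:E * max0 (A i) T))
     >= limsup_inf (fun T => \sum_(i < m) ((T^-1)%R%:E *
          max0 (fun t => (\sum_(p : P | `[< P_plus sigma p >])
                           fine (acheck i p) * tau sigma p t)%R) T)))%E
    /\
    (limsup_inf (fun t => (\sum_(i < m) Num.max (t^-1 * A i t) 0)%R%:E)
     >= limsup_inf (fun t => (\sum_(i < m)
          Num.max (\sum_(p : P | `[< P_plus sigma p >])
                     fine (acheck i p) * rho sigma p t) 0)%R%:E))%E).
Proof.
move=> sw ai A ahat acheck; split=> [ahat_fin|acheck_fin].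
  have Atau i := le_upto_sublinear_sum_limsup_at sw (ai i) (ahat_fin i).
  apply/limsup_inf_le_upto_vanishing/le_upto_vanishing_sum => i.
  exact/le_upto_vanishing_max0/Atau.
have tauA i := le_upto_sublinear_sum_liminf_at sw (ai i) (acheck_fin i).
split; apply: limsup_inf_le_upto_vanishing.
  by apply: le_upto_vanishing_sum => i; exact/le_upto_vanishing_max0/tauA.
have rhoE i t : 0 < t ->
    \sum_(p | `[< P_plus sigma p >]) fine (acheck i p) * rho sigma p t =
    t^-1 * \sum_(p | `[< P_plus sigma p >]) fine (acheck i p) * tau sigma p t.
  by move=> t0; rewrite mulr_sumr; apply: eq_bigr => p _; rewrite /rho t0; ring.
move=> e /(le_upto_vanishing_sum (index_enum 'I_m)
  (fun i => le_upto_vanishing_pos_part_div (tauA i) (rhoE i)))[T0 HT0].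
by exists T0 => T /HT0; rewrite -!sumEFin.
Qed.
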